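(* Let $G$ be a group and $\tau\in G$. Define $\mathrm{var}(x)=\tau^{-1}x^{-1}\tau x$, $\mathfrak{C}_1(\tau)=\{x\in G:\mathrm{var}(x)=\mathrm{id}\}$ and $\mathfrak{C}_2(\tau)=\{x\in G:\mathrm{var}(x)\in\mathfrak{C}_1(\tau)\}$. Let $x,y\in\mathfrak{C}_2(\tau)$. Then: (1) $x^{-1}\in\mathfrak{C}_2(\tau)$; (2) $\mathrm{var}(x)$ and $\mathrm{var}(y^{-1})$ commute if and only if $xy\in\mathfrak{C}_2(\tau)$; (3) $\mathrm{var}(x)=\mathrm{var}(y^{-1})$ if and only if $xy\in\mathfrak{C}_1(\tau)$. *)

From HB Require Import structures.
From mathcomp Require Import all_boot.
From mathcomp Require Export monoid.

Set Implicit Arguments.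
Unset Strict Implicit.
Unset Printing Implicit Defensive.

Local Open Scope group_scope.

Definition var (G : groupType) (tau x : G) : G := tau^-1 * x^-1 * tau * x.

Definition C1 (G : groupType) (tau : G) : G -> Prop := fun x => var tau x = 1.

Definition C2 (G : groupType) (tau : G) : G -> Prop := fun x => C1 tau (var tau x).

From mathcomp Require Import all_boot.
From mathcomp Require Import monoid.
From Corelib Require Import Setoid.

Local Open Scope group_scope.

(* [var tau x] is the commutator [~ tau, x], so [C1 tau] is the centraliser
   of [tau] and [x] lies in [C2 tau] iff [tau] commutes with [~ tau, x].
   Everything follows from [tau ^ x = tau * [~ tau, x]] and
   [[~ tau, x * y] = [~ tau, y] * [~ tau, x] ^ y]: for instance [x * y] lies
   in [C2 tau] iff [tau] commutes with [[~ tau, x] ^ y], i.e. iff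
   [tau ^ y^-1 = tau * [~ tau, y^-1]] commutes with [[~ tau, x]]; as [tau]
   already does, this happens iff [[~ tau, y^-1]] does. *)

Section Commute.
Context {G : groupType}.
Implicit Types u v w z : G.

Lemma commuteC u v : commute u v <-> commute v u.
Proof. by split; apply: commute_sym. Qed.

Lemma commuteJ u v z : commute (u ^ z) (v ^ z) <-> commute u v.
Proof. by rewrite /commute -!conjMg; split=> [/conjg_inj | ->]. Qed.

Lemma commute_conjr u v z : commute u (v ^ z) <-> commute (u ^ z^-1) v.
Proof. by rewrite -(commuteJ (u ^ z^-1) v z) conjgKV. Qed.

Lemma commuteMr_cancel u v w : commute u v -> commute u (v * w) <-> commute u w.
Proof.
by move=> cuv; rewrite /commute mulgA cuv -!mulgA; split=> [/mulgI | ->].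
Qed.

End Commute.

Section Var.
Context {G : groupType}.
Implicit Types tau w x y z : G.

Lemma varE tau z : var tau z = [~ tau, z].
Proof. by rewrite /var commgEl conjgE !mulgA. Qed.

Lemma conjg_var tau z : tau ^ z = tau * var tau z.
Proof. by rewrite varE commgEl mulVKg. Qed.

Lemma var1 tau : var tau 1 = 1.
Proof. by rewrite varE commg1. Qed.

Lemma varM tau x y : var tau (x * y) = var tau y * var tau x ^ y.
Proof.
apply: (@mulgI _ tau).
by rewrite -conjg_var conjgM (conjg_var tau x) conjMg (conjg_var tau y) -mulgA.
Qed.

Lemma varV tau z : var tau z^-1 = (var tau z)^-1 ^ z^-1.
Proof.
apply: (@mulIg _ (var tau z ^ z^-1)).
by rewrite -varM mulgV var1 conjVg mulVg.
Qed.

Lemma C1_commute tau w : C1 tau w <-> commute tau w.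
Proof. by rewrite /C1 varE; split=> [/eqP/commgP | /commgP/eqP]. Qed.

Lemma C2V tau z : C2 tau z -> C2 tau z^-1.
Proof.
rewrite /C2 !C1_commute varV commute_conjr invgK conjg_var => cta.
by apply/commuteC/commuteM; apply/commuteC/commuteV.
Qed.

Lemma C2M_commute tau x y : C2 tau x -> C2 tau y ->
  commute (var tau x) (var tau y^-1) <-> C2 tau (x * y).
Proof.
rewrite /C2 !C1_commute varM => /commute_sym cat ctc.
rewrite commuteMr_cancel // commute_conjr conjg_var [commute (tau * _) _]commuteC.
by rewrite commuteMr_cancel.
Qed.

Lemma C1M_var_eq tau x y : var tau x = var tau y^-1 <-> C1 tau (x * y).
Proof.
rewrite /C1 varM varV; split=> [-> | /mulg1_eq ->]; last by rewrite conjgK.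
by rewrite conjgKV mulgV.
Qed.

End Var.

Theorem lemmaA2 (G : groupType) (tau x y : G) (hx : C2 tau x) (hy : C2 tau y) :
  [/\ C2 tau x^-1,
      commute (var tau x) (var tau y^-1) <-> C2 tau (x * y)
    & var tau x = var tau y^-1 <-> C1 tau (x * y)].
Proof. by split; [apply: C2V | apply: C2M_commute | apply: C1M_var_eq]. Qed.
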